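(* In $D_n$: (1) $w_L\cdot s_1=s_{1'}\cdot w_L$ for $2\le L\le n-1$; (2) $w_L\cdot s_{1'}=s_1\cdot w_L$ for $2\le L\le n-1$; (3) $w_L\cdot s_k=s_k\cdot w_L$ whenever $2\le k\le L-1$ and $L\le n-1$.
   Context: $D_n$ ($n\ge2$) is the Coxeter group with generators $s_{1'},s_1,\dots,s_{n-1}$ and relations $s^2=1$, $(s_i s_{i+1})^3=1$, $(s_is_j)^2=1$ for $|i-j|\ge 2$, $(s_{1'}s_2)^3=1$, $(s_{1'}s_i)^2=1$ for $i\ne 2$. $w_L=s_L s_{L-1}\cdots s_2 s_1 s_{1'} s_2\cdots s_L$ for $1\le L\le n-1$. *)

From mathcomp Require Import all_boot.
Set Implicit Arguments. Unset Strict Implicit. Unset Printing Implicit Defensive.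

(* Generators of D_n are encoded by natural numbers:
     0        encodes s_{1'}
     i (1 <= i <= n-1) encodes s_i.
   A generator code a is valid in D_n iff a < n. *)

Definition coxD (a b : nat) : nat :=
  if a == b then 1
  else if (a == 0) || (b == 0) then
         (if (a + b == 2) then 3 else 2)          (* s_{1'} with s_i: 3 iff i = 2 *)
       else if (a == b.+1) || (b == a.+1) then 3 else 2.

Fixpoint wpow (w : seq nat) (k : nat) : seq nat :=
  if k is k'.+1 then w ++ wpow w k' else [::].

(* The group D_n is the quotient of the free monoid on the generators
   by this congruence (since s^2 = 1 for every generator, the monoid
   presentation defines the same group as the group presentation). *)
Inductive Deq (n : nat) : seq nat -> seq nat -> Prop :=
| Deq_refl u : Deq n u u
| Deq_sym u v : Deq n u v -> Deq n v u
| Deq_trans u v w : Deq n u v -> Deq n v w -> Deq n u w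
| Deq_ctx x y u v : Deq n u v -> Deq n (x ++ u ++ y) (x ++ v ++ y)
| Deq_rel a b : a < n -> b < n -> Deq n (wpow [:: a; b] (coxD a b)) [::].

(* w_L = s_L s_{L-1} ... s_2 s_1 s_{1'} s_2 ... s_L *)
Definition wL (L : nat) : seq nat :=
  rev (iota 1 L) ++ [:: 0] ++ iota 2 L.-1.

From Stdlib Require Import Setoid Morphisms.
From mathcomp Require Import all_boot zify.

(* Since w_(L+1) = s_(L+1) w_L s_(L+1) and s_(L+1) commutes with s_1, s_(1')
   and every s_k with k < L, each of the three relations passes from w_L to
   w_(L+1) by conjugation.  It therefore suffices to check the first instance:
   L = 2 for (1) and (2), a short computation with braid moves, and L = k + 1
   for (3), where w_(k+1) = s_(k+1) s_k w_(k-1) s_k s_(k+1), the word w_(k-1)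
   commutes with s_(k+1), and two braid moves s_k s_(k+1) s_k = s_(k+1) s_k s_(k+1)
   move s_k through. *)

Lemma coxD_sym a b : coxD a b = coxD b a.
Proof. by rewrite /coxD eq_sym addnC [(b == 0) || _]orbC [(b == a.+1) || _]orbC. Qed.

Lemma coxD_far a b : a.+2 <= b -> 3 <= b -> coxD a b = 2.
Proof.
rewrite /coxD => hab hb; case: eqP => [|_]; first lia.
case: ifP => [/orP[]/eqP ?|/norP[/eqP ? /eqP ?]]; first (by case: eqP; lia); first lia.
by case: ifP => // /orP[]/eqP; lia.
Qed.

Lemma coxD_succ a : 1 <= a -> coxD a a.+1 = 3.
Proof.
rewrite /coxD => ha; case: eqP => [|_]; first lia.
by case: ifP => [/orP[]/eqP|_]; [lia | lia | rewrite eqxx orbT].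
Qed.

Lemma wL_S L : 1 <= L -> wL L.+1 = L.+1 :: wL L ++ [:: L.+1].
Proof.
case: L => // L _; rewrite /wL !succnK.
have iota1 := iotaD 1 L.+1 1; have iota2 := iotaD 2 L 1; rewrite !addn1 in iota1 iota2.
by rewrite iota1 iota2 rev_cat -!catA /= add1n add2n.
Qed.

Lemma mem_wL L x : x \in wL L -> x <= L.
Proof.
rewrite /wL !mem_cat mem_rev !mem_iota inE.
by case/orP=> [|/orP[/eqP -> //|]] /andP[]; case: L => [|L] /=; lia.
Qed.

Section CoxeterMoves.

Variable n : nat.

#[local] Instance Deq_Equivalence : Equivalence (Deq n).
Proof. by split; [exact: Deq_refl | exact: Deq_sym | exact: Deq_trans]. Qed.

#[local] Instance cons_Deq_Proper : Proper (eq ==> Deq n ==> Deq n) (@cons nat).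
Proof. by move=> x _ <- u v /(Deq_ctx [:: x] [::]); rewrite !cats0. Qed.

#[local] Instance cat_Deq_Proper : Proper (Deq n ==> Deq n ==> Deq n) (@cat nat).
Proof.
move=> u u' hu v v' hv; transitivity (u' ++ v); first exact: (Deq_ctx [::] v hu).
by have := Deq_ctx u' [::] hv; rewrite !cats0.
Qed.

#[local] Hint Resolve Deq_refl : core.

Lemma Deq_coxeter a b w : a < n -> b < n ->
  Deq n (wpow [:: a; b] (coxD a b) ++ w) w.
Proof. by move=> ha hb; have := Deq_ctx [::] w (Deq_rel ha hb). Qed.

Lemma Deq_sq a w : a < n -> Deq n (a :: a :: w) w.
Proof. by move=> ha; have := Deq_coxeter _ _ w ha ha; rewrite /coxD eqxx. Qed.

Lemma Deq_swap a b w : a < n -> b < n -> coxD a b = 2 ->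
  Deq n (a :: b :: w) (b :: a :: w).
Proof.
move=> ha hb hab; have := Deq_coxeter _ _ (b :: a :: w) ha hb; rewrite hab /= => <-.
by rewrite (Deq_sq b) // (Deq_sq a).
Qed.

Lemma Deq_braid a b w : a < n -> b < n -> coxD a b = 3 ->
  Deq n (a :: b :: a :: w) (b :: a :: b :: w).
Proof.
move=> ha hb hab; have := Deq_coxeter _ _ (b :: a :: b :: w) ha hb; rewrite hab /= => <-.
by rewrite (Deq_sq b) // (Deq_sq a) // (Deq_sq b).
Qed.

Lemma Deq_swap_word u m w : m < n ->
  (forall x, x \in u -> x < n /\ coxD x m = 2) ->
  Deq n (u ++ m :: w) (m :: u ++ w).
Proof.
move=> hm; elim: u => [|x u IH] hu //=.
have [hx hxm] := hu x (mem_head x u).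
rewrite IH => [|y hy]; last by apply: hu; rewrite inE hy orbT.
exact: Deq_swap.
Qed.

Lemma Deq_conj_intertwine c a b W : c < n -> a < n -> b < n ->
  coxD a c = 2 -> coxD b c = 2 ->
  Deq n (W ++ [:: a]) (b :: W) ->
  Deq n ((c :: W ++ [:: c]) ++ [:: a]) (b :: c :: W ++ [:: c]).
Proof.
move=> hc ha hb; rewrite coxD_sym [coxD b c]coxD_sym => hca hcb hW.
rewrite /= -catA /= (Deq_swap c a) // (catA W [:: a] [:: c]) hW /=.
by rewrite (Deq_swap c b).
Qed.

Lemma Deq_wL_intertwine_up L0 L a b : 2 <= L0 <= L -> L < n ->
  a < L0 -> b < L0 ->
  Deq n (wL L0 ++ [:: a]) (b :: wL L0) -> Deq n (wL L ++ [:: a]) (b :: wL L).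
Proof.
case/andP=> hL0 + + ha hb base; elim: L => [|L IH] hL hLn; first lia.
have [<-|hL0L] := eqVneq L0 L.+1; first exact: base.
rewrite wL_S; last lia.
apply: Deq_conj_intertwine; rewrite ?IH ?coxD_far //; lia.
Qed.

Lemma Deq_wL2_s1 : 2 < n -> Deq n (wL 2 ++ [:: 1]) (0 :: wL 2).
Proof.
move=> hn; rewrite /wL /=.
rewrite (Deq_swap 1 0) ?(Deq_braid 1 2) ?(Deq_braid 2 0) ?(Deq_swap 0 1) //; lia.
Qed.

Lemma Deq_wL2_s1' : 2 < n -> Deq n (wL 2 ++ [:: 0]) (1 :: wL 2).
Proof.
move=> hn; rewrite /wL /=.
rewrite (Deq_braid 0 2) ?(Deq_braid 2 1) //; lia.
Qed.

Lemma Deq_wL_succ_commute k : 2 <= k -> k.+1 < n ->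
  Deq n (wL k.+1 ++ [:: k]) (k :: wL k.+1).
Proof.
case: k => // j hj hj2; have hj1 : j.+1 < n by lia.
have braid_j : coxD j.+1 j.+2 = 3 by rewrite coxD_succ.
have far_j x : x \in wL j -> x < n /\ coxD x j.+2 = 2.
  by move/mem_wL=> hx; split; [lia | apply: coxD_far; lia].
rewrite wL_S // wL_S; last lia.
move: (wL j) far_j => V far_V /=; rewrite -!catA /=.
rewrite (Deq_braid j.+1 j.+2) // (Deq_swap_word V j.+2) //.
by rewrite -(Deq_braid j.+1 j.+2).
Qed.

End CoxeterMoves.

Theorem mainTheorem12 (n : nat) (hn : 2 <= n) :
  (forall L, 2 <= L <= n.-1 -> Deq n (wL L ++ [:: 1]) ([:: 0] ++ wL L)) /\
  (forall L, 2 <= L <= n.-1 -> Deq n (wL L ++ [:: 0]) ([:: 1] ++ wL L)) /\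
  (forall L k, 2 <= k <= L.-1 -> L <= n.-1 ->
     Deq n (wL L ++ [:: k]) ([:: k] ++ wL L)).
Proof.
split; [|split].
- move=> L /andP[hL hLn]; apply: (Deq_wL_intertwine_up _ 2) => //; try lia.
  apply: Deq_wL2_s1; lia.
- move=> L /andP[hL hLn]; apply: (Deq_wL_intertwine_up _ 2) => //; try lia.
  apply: Deq_wL2_s1'; lia.
- move=> L k /andP[hk hkL] hLn; apply: (Deq_wL_intertwine_up _ k.+1); try lia.
  apply: Deq_wL_succ_commute; lia.
Qed.
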